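(* Let $a^*_{\mathsf A},a^*_{\mathsf B}\ge1$ and $l^*_{\mathsf A},l^*_{\mathsf B}\in[0,1)$. On each mode $X\in\{\mathsf A,\mathsf B\}$ of a two-mode system apply the amplification channel with parameter $a^*_X$ followed by the loss channel with parameter $l^*_X$. The resulting product channel maps every two-mode Gaussian state to a separable state (i.e. annihilates entanglement of all two-mode Gaussian states) if and only if $$\frac1{a^*_{\mathsf A}}+\frac1{a^*_{\mathsf B}}\le1.$$
   Context: Covariance-matrix convention: vacuum has covariance matrix $\mathbb 1/2$. Loss with parameter $l\in[0,1]$: $V\mapsto(1-l)V+l\,\mathbb 1/2$. Amplification with parameter $a\ge1$: $V\mapsto aV+(a-1)\mathbb 1/2$. Separable means separable across the $\mathsf A$–$\mathsf B$ partition. *)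

(* Gaussian-state covariance-matrix formalism, vacuum = 1/2. *)
From HB Require Import structures.
From mathcomp Require Import all_boot all_order all_algebra.
Set Implicit Arguments. Unset Strict Implicit. Unset Printing Implicit Defensive.
Import Order.TTheory GRing.Theory Num.Theory.
Local Open Scope ring_scope.

Section Defs.
Variable R : rcfType.

Definition qform n (M : 'M[R]_n) (x : 'cV[R]_n) : R := (x^T *m M *m x) 0 0.

Definition mx_ge n (M N : 'M[R]_n) : Prop := forall x : 'cV[R]_n, 0 <= qform (M - N) x.

(* single-mode symplectic form, quadratures ordered (x, p) *)
Definition omega1 : 'M[R]_2 :=
  \matrix_(i < 2, j < 2)
    (if (i == 0 :> nat) && (j == 1 :> nat) then 1
     else if (i == 1 :> nat) && (j == 0 :> nat) then -1 else 0).

(* two-mode symplectic form, quadratures ordered (x_A, p_A, x_B, p_B) *)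
Definition omega2 : 'M[R]_(2 + 2) := block_mx omega1 0 0 omega1.

(* V is a bona fide (Gaussian-state) covariance matrix:
   V real symmetric and V + (i/2) Omega >= 0 (as a complex Hermitian matrix);
   written out on z = x + i y this is x^T V x + y^T V y - x^T Omega y >= 0. *)
Definition is_cov n (Om : 'M[R]_n) (V : 'M[R]_n) : Prop :=
  V^T = V /\
  forall x y : 'cV[R]_n, 0 <= qform V x + qform V y - (x^T *m Om *m y) 0 0.

Definition is_cov1 (V : 'M[R]_2) := is_cov omega1 V.
Definition is_cov2 (V : 'M[R]_(2 + 2)) := is_cov omega2 V.

(* Separability (A|B) of a two-mode Gaussian state with covariance matrix V
   (Werner-Wolf): there are single-mode covariance matrices gA, gB with
   V >= gA (+) gB. *)
Definition separable2 (V : 'M[R]_(2 + 2)) : Prop :=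
  exists gA gB : 'M[R]_2, is_cov1 gA /\ is_cov1 gB /\ mx_ge V (block_mx gA 0 0 gB).

Definition gchan n (X Y : 'M[R]_n) (V : 'M[R]_n) : 'M[R]_n := X *m V *m X^T + Y.

Definition local2 (tA yA tB yB : R) : 'M[R]_(2 + 2) -> 'M[R]_(2 + 2) :=
  gchan (block_mx (Num.sqrt tA)%:M 0 0 (Num.sqrt tB)%:M)
        (block_mx yA%:M 0 0 yB%:M).

Definition amp2 (aA aB : R) := local2 aA ((aA - 1) / 2) aB ((aB - 1) / 2).

Definition loss2 (lA lB : R) := local2 (1 - lA) (lA / 2) (1 - lB) (lB / 2).

End Defs.

From mathcomp Require Import all_boot all_order all_algebra.
From mathcomp Require Import ring lra.
Import Order.TTheory GRing.Theory Num.Theory.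
Set Implicit Arguments. Unset Strict Implicit. Unset Printing Implicit Defensive.
Local Open Scope ring_scope.

(* Write p = 1/a_A and q = 1/a_B.  Loss is monotone and maps product
   covariance matrices to product covariance matrices, so it preserves
   separability; the amplifier is, up to the congruence by
   diag(sqrt a_A, sqrt a_B), the addition of vacuum noise with weights 1 - p
   and 1 - q.  If p + q <= 1, blending V + iΩ/2 >= 0 with its conjugate and
   with the added noise gives U + i(p+q)/2 (Ω ⊕ 0) >= 0 for the noisy matrix U,
   and the same with the modes exchanged.  The Schur complements S_A, S_B of U
   then satisfy S + i(p+q)/2 Ω >= 0, U >= S_A ⊕ 0 and U >= 0 ⊕ S_B, so
   U >= (p S_A ⊕ q S_B)/(p+q), which the amplifier turns into the product of the
   covariance matrices S_A/(p+q) and S_B/(p+q).  If p + q > 1, a two-mode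
   squeezed vacuum whose EPR quadratures have variance e < p + q - 1 is mapped
   to a state violating the PPT condition W + i/2 (Ω ⊕ -Ω) >= 0 obeyed by every
   separable state. *)

Section HermitianForms.
Variable R : rcfType.

Definition bform m n (M : 'M[R]_(m, n)) (x : 'cV[R]_m) (y : 'cV[R]_n) : R :=
  (x^T *m M *m y) 0 0.

Lemma qformE n (M : 'M[R]_n) x : qform M x = bform M x x.
Proof. by []. Qed.

Lemma bformDm m n (M1 M2 : 'M[R]_(m, n)) x y :
  bform (M1 + M2) x y = bform M1 x y + bform M2 x y.
Proof. by rewrite /bform mulmxDr mulmxDl mxE. Qed.

Lemma bformZm m n a (M : 'M[R]_(m, n)) x y : bform (a *: M) x y = a * bform M x y.
Proof. by rewrite /bform -scalemxAr -scalemxAl mxE. Qed.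

Lemma bformNm m n (M : 'M[R]_(m, n)) x y : bform (- M) x y = - bform M x y.
Proof. by rewrite -scaleN1r bformZm mulN1r. Qed.

Lemma bformBm m n (M1 M2 : 'M[R]_(m, n)) x y :
  bform (M1 - M2) x y = bform M1 x y - bform M2 x y.
Proof. by rewrite bformDm bformNm. Qed.

Lemma bform0m m n x y : bform (0 : 'M[R]_(m, n)) x y = 0.
Proof. by rewrite /bform mulmx0 mul0mx mxE. Qed.

Lemma bformx0 m n (M : 'M[R]_(m, n)) x : bform M x 0 = 0.
Proof. by rewrite /bform mulmx0 mxE. Qed.

Lemma bform_tr m n (M : 'M[R]_(m, n)) x y : bform M x y = bform M^T y x.
Proof.
rewrite /bform -[in RHS](trmxK x) -!trmx_mul mulmxA.
by rewrite [RHS]mxE.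
Qed.

Lemma bform0x m n (M : 'M[R]_(m, n)) y : bform M 0 y = 0.
Proof. by rewrite bform_tr bformx0. Qed.

Lemma bformDl m n (M : 'M[R]_(m, n)) x1 x2 y :
  bform M (x1 + x2) y = bform M x1 y + bform M x2 y.
Proof. by rewrite /bform linearD !mulmxDl mxE. Qed.

Lemma bformDr m n (M : 'M[R]_(m, n)) x y1 y2 :
  bform M x (y1 + y2) = bform M x y1 + bform M x y2.
Proof. by rewrite /bform mulmxDr mxE. Qed.

Lemma bformZl m n (M : 'M[R]_(m, n)) a x y : bform M (a *: x) y = a * bform M x y.
Proof. by rewrite /bform linearZ /= -!scalemxAl mxE. Qed.

Lemma bformZr m n (M : 'M[R]_(m, n)) a x y : bform M x (a *: y) = a * bform M x y.
Proof. by rewrite /bform -scalemxAr mxE. Qed.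

Lemma bformMr m n p (M : 'M[R]_(m, p)) (Q : 'M[R]_(p, n)) x y :
  bform (M *m Q) x y = bform M x (Q *m y).
Proof. by rewrite /bform !mulmxA. Qed.

Lemma bform_mulmx m n p q (P : 'M[R]_(m, p)) (M : 'M[R]_(p, q)) (Q : 'M[R]_(q, n)) x y :
  bform (P *m M *m Q) x y = bform M (P^T *m x) (Q *m y).
Proof. by rewrite /bform trmx_mul trmxK !mulmxA. Qed.

Lemma bform_block m n (A : 'M[R]_m) B C (E : 'M[R]_n) x1 x2 y1 y2 :
  bform (block_mx A B C E) (col_mx x1 x2) (col_mx y1 y2) =
  bform A x1 y1 + bform B x1 y2 + bform C x2 y1 + bform E x2 y2.
Proof.
rewrite /bform tr_col_mx mul_row_block mul_row_col !mulmxDl !mxE.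
by rewrite addrACA !addrA.
Qed.

(* For M symmetric and N antisymmetric, [hform M N x y] is the value of the
   Hermitian form of M + (i/2) N at x + i y; [is_cov Om V] is [herm_ge0 V Om]
   for symmetric V. *)
Definition hform n (M N : 'M[R]_n) x y : R := qform M x + qform M y - bform N x y.

Definition herm_ge0 n (M N : 'M[R]_n) : Prop := forall x y, 0 <= hform M N x y.

Lemma is_covE n (Om V : 'M[R]_n) : is_cov Om V = (V^T = V /\ herm_ge0 V Om).
Proof. by []. Qed.

Lemma herm_ge0_qform n (M N : 'M[R]_n) x : herm_ge0 M N -> 0 <= qform M x.
Proof. by move=> /(_ x 0); rewrite /hform !qformE !bformx0 addr0 subr0. Qed.

Lemma herm_ge0D n (M1 M2 N1 N2 : 'M[R]_n) :
  herm_ge0 M1 N1 -> herm_ge0 M2 N2 -> herm_ge0 (M1 + M2) (N1 + N2).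
Proof.
move=> h1 h2 x y; have := h1 x y; have := h2 x y.
rewrite /hform !qformE !bformDm; lra.
Qed.

Lemma herm_ge0Z n a (M N : 'M[R]_n) :
  0 <= a -> herm_ge0 M N -> herm_ge0 (a *: M) (a *: N).
Proof.
move=> a0 h x y; have := mulr_ge0 a0 (h x y).
by rewrite /hform !qformE !bformZm mulrBr mulrDr.
Qed.

Lemma herm_ge0_scale n c s (M N : 'M[R]_n) :
  `|s| <= c -> herm_ge0 M (c *: N) -> herm_ge0 M (s *: N).
Proof.
move=> sc h x y; have := h x y; have := h x (- y).
rewrite /hform !qformE -[- y]scaleN1r !(bformZl, bformZr, bformZm).
set A := bform M x x + bform M y y; set b := bform N x y.
rewrite !mulN1r opprK -/A => h2 h1.
have cb : c * `|b| <= A.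
  by have [b0|b0] := lerP 0 b; [rewrite ger0_norm | rewrite ltr0_norm]; lra.
have : s * b <= c * `|b|.
  by rewrite (le_trans (ler_norm _)) // normrM ler_wpM2r.
lra.
Qed.

Lemma hform_block m n (A : 'M[R]_m) B C (E : 'M[R]_n) N1 N2 x1 x2 y1 y2 :
  hform (block_mx A B C E) (block_mx N1 0 0 N2) (col_mx x1 x2) (col_mx y1 y2) =
  hform A N1 x1 y1 + hform E N2 x2 y2
  + (bform B x1 x2 + bform C x2 x1) + (bform B y1 y2 + bform C y2 y1).
Proof. by rewrite /hform !qformE !bform_block !bform0m; ring. Qed.

Lemma herm_ge0_block m n (M1 N1 : 'M[R]_m) (M2 N2 : 'M[R]_n) :
  herm_ge0 M1 N1 -> herm_ge0 M2 N2 -> herm_ge0 (block_mx M1 0 0 M2) (block_mx N1 0 0 N2).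
Proof.
move=> h1 h2 x y; rewrite -(vsubmxK x) -(vsubmxK y) hform_block !bform0m !addr0.
exact: addr_ge0.
Qed.

Lemma herm_ge0_congr m n (X : 'M[R]_(m, n)) (M N : 'M[R]_n) :
  herm_ge0 M N -> herm_ge0 (X *m M *m X^T) (X *m N *m X^T).
Proof. by move=> h x y; rewrite /hform !qformE !bform_mulmx; apply: h. Qed.

Lemma bform2E (M : 'M[R]_2) x y :
  bform M x y = x 0 0 * (M 0 0 * y 0 0 + M 0 1 * y 1 0)
              + x 1 0 * (M 1 0 * y 0 0 + M 1 1 * y 1 0).
Proof.
have sum2 (F : 'I_2 -> R) : \sum_i F i = F 0 + F 1.
  by rewrite big_ord_recl big_ord1; congr (_ + F _); apply: val_inj.
rewrite /bform mxE sum2 !mxE !sum2 !mxE; ring.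
Qed.

Lemma herm_ge0_vacuum c s : `|s| <= c -> herm_ge0 (c / 2)%:M (s *: omega1 R).
Proof.
move=> sc; apply: (herm_ge0_scale sc).
rewrite -scale_scalar_mx; apply: herm_ge0Z; first exact: le_trans (normr_ge0 s) sc.
move=> x y; rewrite /hform !qformE !bform2E !mxE /=.
rewrite !mulr1n !mulr0n.
have := addr_ge0 (sqr_ge0 (x 0 0 - y 1 0)) (sqr_ge0 (x 1 0 + y 0 0)).
nra.
Qed.

Lemma mx_ge_herm n (M N : 'M[R]_n) : mx_ge M N -> herm_ge0 (M - N) 0.
Proof. by move=> h x y; rewrite /hform bform0m subr0 addr_ge0. Qed.

Lemma mx_ge_convex n c (M N1 N2 : 'M[R]_n) :
  0 <= c <= 1 -> mx_ge M N1 -> mx_ge M N2 -> mx_ge M (c *: N1 + (1 - c) *: N2).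
Proof.
move=> /andP[c0 c1] h1 h2 x; have := h1 x; have := h2 x.
rewrite !qformE !bformBm bformDm !bformZm; nra.
Qed.

Lemma qform_gchan n (X Y V : 'M[R]_n) x :
  qform (gchan X Y V) x = qform V (X^T *m x) + qform Y x.
Proof. by rewrite /gchan !qformE bformDm bform_mulmx. Qed.

Lemma mx_ge_gchan n (X Y V W : 'M[R]_n) :
  mx_ge V W -> mx_ge (gchan X Y V) (gchan X Y W).
Proof.
move=> h x; rewrite /gchan opprD addrACA subrr addr0 -mulmxBl -mulmxBr.
by rewrite qformE bform_mulmx; apply: h.
Qed.

Lemma separable2_ppt (W : 'M[R]_(2 + 2)) :
  separable2 W -> herm_ge0 W (block_mx (omega1 R) 0 0 (- omega1 R)).
Proof.
case=> gA [gB [[_ covA] [[_ covB] ge]]].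
have covB' : herm_ge0 gB (- omega1 R).
  by rewrite -scaleN1r; apply: (herm_ge0_scale (c := 1)); rewrite ?normrN1 ?scale1r.
rewrite -(subrK (block_mx gA 0 0 gB) W) -[block_mx (omega1 R) _ _ _]add0r.
exact: herm_ge0D (mx_ge_herm ge) (herm_ge0_block covA covB').
Qed.

Lemma psd_add_scalar_unitmx n (M : 'M[R]_n) c :
  (forall x, 0 <= qform M x) -> 0 < c -> M + c%:M \in unitmx.
Proof.
move=> M0 c0; rewrite unitmxE unitfE; apply/negP => /det0P[v v0 vM].
have vv : 0 < (v *m v^T) 0 0.
  have sq j : 0 <= v 0 j * v^T j 0 by rewrite mxE -expr2 sqr_ge0.
  rewrite mxE lt_def sumr_ge0 // andbT.
  apply: contra v0 => /eqP/(psumr_eq0P (fun j _ => sq j)) v_eq0.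
  apply/eqP/matrixP => i j; rewrite ord1 !mxE; apply/eqP; rewrite -sqrf_eq0 expr2.
  by have := v_eq0 j isT; rewrite mxE => ->.
have := M0 v^T; have : qform (M + c%:M) v^T = 0 by rewrite /qform trmxK vM mul0mx mxE.
rewrite qformE bformDm -qformE /bform trmxK mul_mx_scalar -scalemxAl mxE; nra.
Qed.

Section Schur.
Variables (m n : nat) (A : 'M[R]_m) (C : 'M[R]_(m, n)) (B : 'M[R]_n).
Hypotheses (B_sym : B^T = B) (B_unit : B \in unitmx).

Definition schur := A - C *m invmx B *m C^T.

Lemma schur_sym : A^T = A -> schur^T = schur.
Proof. by move=> A_sym; rewrite /schur linearB /= !trmx_mul trmxK trmx_inv B_sym A_sym mulmxA. Qed.

Lemma qform_schur x1 x2 :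
  qform (block_mx A C C^T B) (col_mx x1 x2)
  = qform schur x1 + qform B (x2 + invmx B *m C^T *m x1).
Proof.
set K := invmx B *m C^T.
have BK : B *m K = C^T by rewrite mulmxA mulmxV // mul1mx.
have KBK : K^T *m B *m K = C *m invmx B *m C^T.
  by rewrite -mulmxA BK trmx_mul trmxK trmx_inv B_sym.
have cross : bform B x2 (K *m x1) = bform C x1 x2 by rewrite -bformMr BK -bform_tr.
have square : bform B (K *m x1) (K *m x1) = bform (C *m invmx B *m C^T) x1 x1.
  by rewrite -KBK bform_mulmx trmxK.
rewrite !qformE bform_block bformBm bformDl !bformDr -bform_tr [bform B (K *m x1) x2]bform_tr B_sym.
by rewrite cross square; ring.
Qed.

Lemma herm_ge0_schur N :
  herm_ge0 (block_mx A C C^T B) (block_mx N 0 0 0) ->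
  herm_ge0 schur N /\ mx_ge (block_mx A C C^T B) (block_mx schur 0 0 0).
Proof.
move=> h; split=> [x y|x].
  have := h (col_mx x (- (invmx B *m C^T *m x))) (col_mx y (- (invmx B *m C^T *m y))).
  by rewrite /hform !qform_schur !addNr !qformE !bformx0 !addr0 bform_block !bform0m !addr0.
have B_psd : 0 <= qform B (dsubmx x + invmx B *m C^T *m usubmx x).
  have := herm_ge0_qform (col_mx 0 (dsubmx x + invmx B *m C^T *m usubmx x)) h.
  by rewrite qform_schur mulmx0 addr0 qformE bform0x add0r.
rewrite -(vsubmxK x) qformE bformBm -qformE qform_schur qformE bform_block.
by rewrite !bform0m !addr0 -!qformE addrC addKr.
Qed.

End Schur.

Lemma sym_block_mx m n (U : 'M[R]_(m + n)) :
  U^T = U -> block_mx (ulsubmx U) (ursubmx U) (ursubmx U)^T (drsubmx U) = U.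
Proof. by move=> U_sym; rewrite trmx_ursub U_sym submxK. Qed.

End HermitianForms.

Section LocalChannels.
Variable R : rcfType.

Definition noise2 (a b : R) : 'M[R]_(2 + 2) := block_mx (a / 2)%:M 0 0 (b / 2)%:M.

Definition swap_modes n : 'M[R]_(n + n) := block_mx 0 1%:M 1%:M 0.

Lemma swap_modes_congr n (A B C E : 'M[R]_n) :
  swap_modes n *m block_mx A B C E *m (swap_modes n)^T = block_mx E C B A.
Proof.
rewrite /swap_modes tr_block_mx !trmx0 trmx1 !mulmx_block.
by rewrite !(mul0mx, mul1mx, mulmx0, mulmx1, addr0, add0r).
Qed.

Lemma swap_modesK n (M : 'M[R]_(n + n)) :
  swap_modes n *m (swap_modes n *m M *m (swap_modes n)^T) *m (swap_modes n)^T = M.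
Proof. by rewrite -(submxK M) !swap_modes_congr. Qed.

Lemma diag_block_congr m n a b (A : 'M[R]_m) B C (E : 'M[R]_n) :
  block_mx a%:M 0 0 b%:M *m block_mx A B C E *m (block_mx a%:M 0 0 b%:M)^T
  = block_mx ((a * a) *: A) ((a * b) *: B) ((a * b) *: C) ((b * b) *: E).
Proof.
rewrite tr_block_mx !trmx0 !tr_scalar_mx !mulmx_block.
rewrite !(mul0mx, mulmx0, addr0, add0r) !mul_scalar_mx !mul_mx_scalar.
by rewrite !scalerA [b * a]mulrC.
Qed.

Lemma local2_block tA yA tB yB (A B C E : 'M[R]_2) : 0 <= tA -> 0 <= tB ->
  local2 tA yA tB yB (block_mx A B C E)
  = block_mx (tA *: A + yA%:M) ((Num.sqrt tA * Num.sqrt tB) *: B)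
             ((Num.sqrt tA * Num.sqrt tB) *: C) (tB *: E + yB%:M).
Proof.
move=> tA0 tB0.
by rewrite /local2 /gchan diag_block_congr add_block_mx !addr0 -!expr2 !sqr_sqrtr.
Qed.

Lemma local2_comp t1 y1 t2 y2 s1 z1 s2 z2 (V : 'M[R]_(2 + 2)) :
  0 <= t1 -> 0 <= t2 -> 0 <= s1 -> 0 <= s2 ->
  local2 t1 y1 t2 y2 (local2 s1 z1 s2 z2 V)
  = local2 (t1 * s1) (t1 * z1 + y1) (t2 * s2) (t2 * z2 + y2) V.
Proof.
move=> t10 t20 s10 s20.
rewrite /local2 /gchan mulmxDr mulmxDl diag_block_congr -!expr2 !sqr_sqrtr //.
rewrite !scaler0 !scale_scalar_mx -addrA add_block_mx !addr0 -!raddfD /=; congr (_ + _).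
rewrite !sqrtrM //.
have -> : forall a b c d : R, block_mx (a * b)%:M 0 0 (c * d)%:M
  = block_mx a%:M 0 0 c%:M *m block_mx b%:M 0 0 d%:M :> 'M_(2 + 2).
  by move=> a b c d; rewrite mulmx_block !(mul0mx, mulmx0, addr0, add0r) -!scalar_mxM.
by rewrite trmx_mul !mulmxA.
Qed.

Lemma mx_ge_local2 tA yA tB yB (V W : 'M[R]_(2 + 2)) :
  mx_ge V W -> mx_ge (local2 tA yA tB yB V) (local2 tA yA tB yB W).
Proof. exact: mx_ge_gchan. Qed.

Lemma cov2_swap V : is_cov2 V -> is_cov2 (swap_modes 2 *m V *m (swap_modes 2)^T).
Proof.
case=> V_sym V_herm; split; first by rewrite !trmx_mul trmxK V_sym mulmxA.
by have := herm_ge0_congr (swap_modes 2) V_herm; rewrite /omega2 swap_modes_congr.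
Qed.

Lemma cov1_loss l (g : 'M[R]_2) :
  0 <= l <= 1 -> is_cov1 g -> is_cov1 ((1 - l) *: g + (l / 2)%:M).
Proof.
rewrite /is_cov1 !is_covE => /andP[l0 l1] [g_sym g_herm]; split.
  by rewrite linearD linearZ /= g_sym tr_scalar_mx.
have -> : omega1 R = (1 - l) *: omega1 R + l *: omega1 R by rewrite -scalerDl subrK scale1r.
apply: herm_ge0D; first by apply: herm_ge0Z; rewrite ?subr_ge0.
by apply: herm_ge0_vacuum; rewrite ger0_norm.
Qed.

Lemma separable2_loss2 lA lB (W : 'M[R]_(2 + 2)) :
  0 <= lA <= 1 -> 0 <= lB <= 1 -> separable2 W -> separable2 (loss2 lA lB W).
Proof.
move=> lA01 lB01 [gA [gB [covA [covB ge]]]].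
exists ((1 - lA) *: gA + (lA / 2)%:M), ((1 - lB) *: gB + (lB / 2)%:M).
split; first exact: cov1_loss.
split; first exact: cov1_loss.
have [/andP[_ lA1] /andP[_ lB1]] := (lA01, lB01).
have := mx_ge_local2 (1 - lA) (lA / 2) (1 - lB) (lB / 2) ge.
by rewrite local2_block ?subr_ge0 // !scaler0.
Qed.

Lemma herm_ge0_noise2 a b sA sB : `|sA| <= a -> `|sB| <= b ->
  herm_ge0 (noise2 a b) (block_mx (sA *: omega1 R) 0 0 (sB *: omega1 R)).
Proof. by move=> ha hb; apply: herm_ge0_block; apply: herm_ge0_vacuum. Qed.

Lemma cov2_noise_schur V p q : is_cov2 V -> 0 < p -> 0 < q -> p + q <= 1 ->
  exists S : 'M[R]_2, [/\ S^T = S, herm_ge0 S ((p + q) *: omega1 R)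
                        & mx_ge (V + noise2 (1 - p) (1 - q)) (block_mx S 0 0 0)].
Proof.
rewrite /is_cov2 is_covE => -[V_sym V_herm] p0 q0 pq.
set U := V + noise2 _ _.
have U_sym : U^T = U by rewrite linearD /= V_sym tr_block_mx !trmx0 !tr_scalar_mx.
have U_herm : herm_ge0 U (block_mx ((p + q) *: omega1 R) 0 0 0).
  (* V contributes t Ω on both modes; the noise adds (1 - p) Ω on A and
     cancels the contribution on B. *)
  set t := 2 * p + q - 1.
  have -> : block_mx ((p + q) *: omega1 R) 0 0 0
            = t *: omega2 R + block_mx ((1 - p) *: omega1 R) 0 0 (- t *: omega1 R).
    rewrite /omega2 scale_block_mx add_block_mx !scaler0 !addr0 -!scalerDl addrN scale0r.
    by congr (block_mx (_ *: _) _ _ _); rewrite /t; ring.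
  apply: herm_ge0D; last by apply: herm_ge0_noise2; rewrite ?normrN ler_norml /t; lra.
  apply: (herm_ge0_scale (c := 1)); first by rewrite ler_norml /t; lra.
  by rewrite scale1r.
rewrite -(sym_block_mx U_sym) in U_herm *.
set B := drsubmx U.
have B_sym : B^T = B by rewrite trmx_drsub U_sym.
have B_unit : B \in unitmx.
  rewrite /B /U /noise2 -[V in V + _]submxK add_block_mx block_mxKdr.
  apply: psd_add_scalar_unitmx; last by lra.
  move=> x; have := herm_ge0_qform (col_mx 0 x) V_herm.
  by rewrite -[V in qform V _]submxK qformE bform_block !bformx0 !bform0x !add0r.
have [S_herm S_ge] := herm_ge0_schur B_sym B_unit U_herm.
exists (schur (ulsubmx U) (ursubmx U) B); split=> //.
by apply: schur_sym => //; rewrite trmx_ulsub U_sym.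
Qed.

Lemma amp2E aA aB (V : 'M[R]_(2 + 2)) : 0 < aA -> 0 < aB ->
  amp2 aA aB V = gchan (block_mx (Num.sqrt aA)%:M 0 0 (Num.sqrt aB)%:M) 0
                       (V + noise2 (1 - aA^-1) (1 - aB^-1)).
Proof.
move=> aA0 aB0; rewrite /amp2 /local2 /gchan addr0 mulmxDr mulmxDl /noise2 diag_block_congr.
rewrite -!expr2 !sqr_sqrtr ?ltW // !scaler0 !scale_scalar_mx.
by congr (_ + block_mx _%:M _ _ _%:M); field; apply: lt0r_neq0.
Qed.

Lemma separable2_amp2 aA aB (V : 'M[R]_(2 + 2)) : 0 < aA -> 0 < aB ->
  aA^-1 + aB^-1 <= 1 -> is_cov2 V -> separable2 (amp2 aA aB V).
Proof.
move=> aA0 aB0 pq V_cov.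
set p := aA^-1 in pq *; set q := aB^-1 in pq *.
have [p0 q0] : 0 < p /\ 0 < q by rewrite !invr_gt0.
have [SA [SA_sym SA_herm SA_ge]] := cov2_noise_schur V_cov p0 q0 pq.
have qp : q + p <= 1 by rewrite addrC.
have [SB [SB_sym SB_herm SB_ge]] := cov2_noise_schur (cov2_swap V_cov) q0 p0 qp.
rewrite addrC in SB_herm.
have {}SB_ge : mx_ge (V + noise2 (1 - p) (1 - q)) (block_mx 0 0 0 SB).
  have := mx_ge_gchan (swap_modes 2) 0 SB_ge.
  by rewrite /gchan !addr0 mulmxDr mulmxDl swap_modesK /noise2 !swap_modes_congr.
set k := (p + q)^-1.
have k_pq : k * (p + q) = 1 by rewrite mulVf // gt_eqF // addr_gt0.
have k0 : 0 <= k by rewrite invr_ge0 addr_ge0 // ltW.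
have cov_scaled S : S^T = S -> herm_ge0 S ((p + q) *: omega1 R) -> is_cov1 (k *: S).
  move=> S_sym S_herm; rewrite /is_cov1 is_covE linearZ /= S_sym; split=> //.
  by rewrite -[omega1 R]scale1r -k_pq -scalerA; apply: herm_ge0Z.
exists (k *: SA), (k *: SB); do 2!(split; first exact: cov_scaled).
have pk01 : 0 <= p * k <= 1.
  by rewrite mulr_ge0 ?(ltW p0) //= -k_pq mulrC ler_wpM2l // lerDl ltW.
have := mx_ge_gchan (block_mx (Num.sqrt aA)%:M 0 0 (Num.sqrt aB)%:M) 0
          (mx_ge_convex pk01 SA_ge SB_ge).
rewrite -amp2E // /gchan addr0 !scale_block_mx add_block_mx !scaler0 !addr0 !add0r.
rewrite diag_block_congr -!expr2 !sqr_sqrtr ?ltW // !scaler0 !scalerA.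
have -> : aA * (p * k) = k by rewrite mulrA mulfV ?mul1r // gt_eqF.
suff -> : aB * (1 - p * k) = k by [].
have -> : 1 - p * k = q * k by rewrite -k_pq; ring.
by rewrite mulrA mulfV ?mul1r // gt_eqF.
Qed.

End LocalChannels.

Section TwoModeSqueezedVacuum.
Variable R : rcfType.

Definition pauli_z : 'M[R]_2 := \matrix_(i, j) ((i == j)%:R * (if i == 0 then 1 else -1)).

Lemma pauli_z_sym : pauli_z^T = pauli_z.
Proof.
apply/matrixP => i j; rewrite !mxE.
by case: (eqVneq i j) => [->|_]; rewrite ?mul0r.
Qed.

(* The two-mode squeezed vacuum in which x_A - x_B and p_A + p_B have variance e. *)
Definition tmsv (e : R) : 'M[R]_(2 + 2) :=
  block_mx ((e + e^-1) / 4)%:M (((e^-1 - e) / 4) *: pauli_z)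
           (((e^-1 - e) / 4) *: pauli_z) ((e + e^-1) / 4)%:M.

Lemma tmsv_cov e : 0 < e -> is_cov2 (tmsv e).
Proof.
move=> e0; rewrite /is_cov2 is_covE; split.
  by rewrite tr_block_mx !tr_scalar_mx !linearZ /= pauli_z_sym.
move=> x y; rewrite -(vsubmxK x) -(vsubmxK y).
move: (usubmx x) (dsubmx x) (usubmx y) (dsubmx y) => xA xB yA yB.
rewrite /omega2 hform_block /hform !qformE !bformZm !bform2E !mxE /=.
set x0 := xA 0 0; set x1 := xA 1 0; set x2 := xB 0 0; set x3 := xB 1 0.
set y0 := yA 0 0; set y1 := yA 1 0; set y2 := yB 0 0; set y3 := yB 1 0.
(* The state is pure, so its form is a sum of squares. *)
have sos : 0 <= e / 4 * ((e^-1 * (x0 + x2) - (y1 + y3)) ^+ 2 + (x0 - x2 - e^-1 * (y1 - y3)) ^+ 2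
                        + (x1 + x3 + e^-1 * (y0 + y2)) ^+ 2 + (e^-1 * (x1 - x3) + y0 - y2) ^+ 2).
  by rewrite mulr_ge0 ?divr_ge0 ?(ltW e0) // !addr_ge0 ?sqr_ge0.
apply: le_trans sos _; rewrite le_eqVlt; apply/predU1P; left.
by rewrite !mulr1n !mulr0n; field; apply: lt0r_neq0.
Qed.

Definition cv2 (a b : R) : 'cV[R]_2 := \col_i (if i == 0 then a else b).

Lemma tmsv_epr e : 0 < e ->
  qform (tmsv e) (col_mx (cv2 1 0) (cv2 (-1) 0)) = e /\
  qform (tmsv e) (col_mx (cv2 0 1) (cv2 0 1)) = e.
Proof.
move=> e0; split; rewrite qformE bform_block !bformZm !bform2E !mxE /= !mulr1n !mulr0n.
  by field; apply: lt0r_neq0.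
by field; apply: lt0r_neq0.
Qed.

Lemma loss2_amp2_tmsv_not_ppt aA aB lA lB e :
  0 < aA -> 0 < aB -> lA < 1 -> lB < 1 -> 0 < e -> e + 1 < aA^-1 + aB^-1 ->
  ~ herm_ge0 (loss2 lA lB (amp2 aA aB (tmsv e))) (block_mx (omega1 R) 0 0 (- omega1 R)).
Proof.
move=> aA0 aB0 lA1 lB1 e0 big.
have [dA0 dB0] : 0 < 1 - lA /\ 0 < 1 - lB by rewrite !subr_gt0.
rewrite /loss2 /amp2 local2_comp ?ltW //.
set tA := (1 - lA) * aA; set tB := (1 - lB) * aB.
set yA := _ + lA / 2; set yB := _ + lB / 2.
have [tA0 tB0] : 0 < tA /\ 0 < tB by rewrite !mulr_gt0.
(* The channel maps x and y to multiples of the EPR quadratures of the input. *)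
pose x := col_mx (Num.sqrt tB *: cv2 1 0) (Num.sqrt tA *: cv2 (-1) 0).
pose y := col_mx (Num.sqrt tB *: cv2 0 1) (Num.sqrt tA *: cv2 0 1).
have transmit z1 z2 : (block_mx (Num.sqrt tA)%:M 0 0 (Num.sqrt tB)%:M)^T
    *m col_mx (Num.sqrt tB *: z1) (Num.sqrt tA *: z2)
    = (Num.sqrt tA * Num.sqrt tB) *: col_mx z1 z2.
  rewrite tr_block_mx !trmx0 !tr_scalar_mx mul_block_col !mul0mx addr0 add0r.
  by rewrite !mul_scalar_mx !scalerA scale_col_mx [Num.sqrt tB * _]mulrC.
move/(_ x y); apply/negP; rewrite -ltNge.
rewrite /hform /local2 !qform_gchan !transmit !qformE !bformZl !bformZr -!qformE.
have [-> ->] := tmsv_epr e0.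
rewrite /x /y !qformE !bform_block !bform0m !bformZl !bformZr !bform2E !mxE /=.
rewrite !mulr1n !mulr0n.
rewrite [X in X < 0](_ : _ = 2 * (Num.sqrt tA) ^+ 2 * (Num.sqrt tB) ^+ 2 * e
          + (Num.sqrt tB) ^+ 2 * (2 * yA - 1) + (Num.sqrt tA) ^+ 2 * (2 * yB - 1)); last by ring.
rewrite !sqr_sqrtr ?ltW //.
rewrite [X in X < 0](_ : _ = 2 * tA * tB * (e + 1 - (aA^-1 + aB^-1))).
  by rewrite pmulr_rlt0 ?mulr_gt0 // subr_lt0.
by rewrite /tA /tB /yA /yB; field; rewrite !lt0r_neq0.
Qed.

End TwoModeSqueezedVacuum.

Theorem proposition8 (R : rcfType) (aA aB lA lB : R) :
  1 <= aA -> 1 <= aB -> 0 <= lA -> lA < 1 -> 0 <= lB -> lB < 1 ->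
  ((forall V : 'M[R]_(2 + 2), is_cov2 V -> separable2 (loss2 lA lB (amp2 aA aB V)))
   <-> aA^-1 + aB^-1 <= 1).
Proof.
move=> aA1 aB1 lA0 lA1 lB0 lB1.
have [aA0 aB0] : 0 < aA /\ 0 < aB by split; lra.
split=> [EA | pq V V_cov].
  rewrite leNgt; apply/negP => pq.
  have e0 : 0 < (aA^-1 + aB^-1 - 1) / 2 by lra.
  apply: (loss2_amp2_tmsv_not_ppt aA0 aB0 lA1 lB1 e0); first lra.
  exact/separable2_ppt/EA/tmsv_cov.
by apply: separable2_loss2; rewrite ?lA0 ?lB0 ?ltW //; apply: separable2_amp2.
Qed.
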